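(* A function $\gamma:\mathbb{R}^d\times\mathcal{W}\to\mathbb{R}$ is $\mathcal{F}$-local covariogram admissible if and only if it is $\mathcal{M}$-local covariogram admissible.
   Context: $\mathcal{M}$: Lebesgue measurable subsets of $\mathbb{R}^d$; $\mathcal{F}$: closed subsets of $\mathbb{R}^d$. $\mathcal{W}$: bounded open $W$ with $\mathcal{L}^d(\partial W)=0$; $\delta_{y;W}(A)=\mathcal{L}^d(A\cap(y+A)\cap W)$. For $\mathcal{C}\in\{\mathcal{M},\mathcal{F}\}$, $\gamma$ is $\mathcal{C}$-local covariogram admissible if for all $q\ge1$, $a\in\mathbb{R}^q$, $y_i\in\mathbb{R}^d$, $W_i\in\mathcal{W}$, $c\in\mathbb{R}$: $[c+\sum_ia_i\delta_{y_i;W_i}(A)\ge0\ \forall A\in\mathcal{C}]\Rightarrow c+\sum_ia_i\gamma(y_i;W_i)\ge0$. *)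

From HB Require Import structures.
From mathcomp Require Import all_boot all_order all_algebra.
From mathcomp Require Import all_classical all_reals all_analysis.
Set Implicit Arguments. Unset Strict Implicit. Unset Printing Implicit Defensive.
Import Order.TTheory GRing.Theory Num.Theory.
Import numFieldNormedType.Exports.
Local Open Scope classical_set_scope.
Local Open Scope ring_scope.

Section Defs.
Variables (R : realType) (d : nat).
Local Notation V := 'rV[R]_d.

Definition box (a b : V) : set V :=
  [set x | forall i : 'I_d, a ord0 i <= x ord0 i < b ord0 i].

Definition box_vol (a b : V) : R :=
  \prod_(i < d) Num.max 0 (b ord0 i - a ord0 i).

Definition leb_outer (A : set V) : \bar R :=
  ereal_inf [set s | exists a b : nat -> V,
     A `<=` \bigcup_k box (a k) (b k) /\
     s = (\sum_(0 <= k <oo) (box_vol (a k) (b k))%:E)%E].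

Definition leb_measurable (A : set V) : Prop := leb_outer.-caratheodory A.

Definition closed_set (A : set V) : Prop := closed A.

Definition translate (y : V) (A : set V) : set V := (fun x => y + x) @` A.

Definition window (W : set V) : Prop :=
  open W /\ bounded_set W /\ leb_outer (closure W `\` interior W) = 0%E.

(* delta_{y;W}(A) = L^d(A /\ (y + A) /\ W) (finite since W is bounded) *)
Definition delta (y : V) (W A : set V) : R :=
  fine (leb_outer (A `&` translate y A `&` W)).

(* C-local covariogram admissibility of gamma : R^d x W -> R
   (gamma is given as a total function; only its values on windows matter) *)
Definition lc_admissible (C : set V -> Prop) (gamma : V -> set V -> R) : Prop :=
  forall (q : nat) (a : 'I_q -> R) (y : 'I_q -> V) (W : 'I_q -> set V) (c : R),
    (0 < q)%N ->
    (forall i, window (W i)) ->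
    (forall A, C A -> 0 <= c + \sum_(i < q) a i * delta (y i) (W i) A) ->
    0 <= c + \sum_(i < q) a i * gamma (y i) (W i).

End Defs.

From HB Require Import structures.
From mathcomp Require Import all_boot all_order all_algebra.
From mathcomp Require Import all_classical all_reals all_analysis.
From mathcomp Require Import lra ring.
Set Implicit Arguments. Unset Strict Implicit. Unset Printing Implicit Defensive.
Import Order.TTheory GRing.Theory Num.Theory.
Import numFieldNormedType.Exports.
Local Open Scope classical_set_scope.
Local Open Scope ring_scope.

(* Closed sets are Lebesgue measurable, so a combination [c + sum_i a_i delta_i]
   that is nonnegative on all measurable sets is nonnegative on closed ones.
   Conversely, all windows and their translates by the [y_i] lie in a fixed
   ball [K]; by outer regularity of the Lebesgue outer measure, a measurable
   [A] contains a closed [F] with [(A /\ K) \ F] of measure at most [eta], and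
   replacing [A] by [F] moves every [delta_{y_i;W_i}] by at most [2 eta].
   Windows exist only in positive dimension: for [d = 0] every set has outer
   measure at least 1, so no boundary is null. *)

Lemma nneseries_pair_reindex (R : realType) (g : nat -> nat -> \bar R) :
  (forall i j, 0 <= g i j)%E ->
  exists2 f : nat -> nat * nat, (forall p, exists k, f k = p) &
    (\sum_(k <oo) g (f k).1 (f k).2 = \sum_(i <oo) \sum_(j <oo) g i j)%E.
Proof.
move=> g0; have /card_esym/ppcard_eqP[f] := card_nat2.
pose G (p : nat * nat) := g p.1 p.2.
have G0 p : (0 <= G p)%E by exact: g0.
exists f; first by move=> p; exists (f^-1%FUN p); rewrite invK ?inE.
have -> : (\sum_(k <oo) g (f k).1 (f k).2 = \esum_(p in setT) G p)%E.
  by rewrite -(esum_pred_image G _ xpredT) ?[fun=> _]set_true// image_eq.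
under eq_eseriesr do rewrite nneseries_esumT//.
rewrite nneseries_esumT; last by move=> i; exact: esum_ge0.
rewrite esum_esum//; congr esum; exact/seteqP.
Qed.

Section lebesgue_outer.
Variables (R : realType) (d : nat).
Local Notation V := 'rV[R]_d.
Local Notation mu := (@leb_outer R d).
Local Open Scope ereal_scope.

Lemma box_vol_ge0 (a b : V) : (0 <= box_vol a b)%R.
Proof. by apply: prodr_ge0 => i _; rewrite le_max lexx. Qed.

Lemma leb_outer_ge0 (A : set V) : 0 <= mu A.
Proof.
apply: le_ereal_inf_tmp => _ [a [b [_ ->]]].
by apply: nneseries_ge0 => k _; rewrite lee_fin box_vol_ge0.
Qed.

Lemma le_leb_outer (A B : set V) : A `<=` B -> mu A <= mu B.
Proof.
move=> AB; apply: ereal_inf_le_tmp => _ [a [b [Bab ->]]].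
by exists a, b; split => //; exact: subset_trans Bab.
Qed.

Lemma leb_outer_fin_num_sub (A B : set V) :
  A `<=` B -> mu B \is a fin_num -> mu A \is a fin_num.
Proof.
rewrite !ge0_fin_numE ?leb_outer_ge0 // => AB; exact: le_lt_trans (le_leb_outer AB).
Qed.

Lemma leb_outer_le_cover (A : set V) (a b : nat -> V) :
  A `<=` \bigcup_k box (a k) (b k) ->
  mu A <= \sum_(k <oo) (box_vol (a k) (b k))%:E.
Proof. by move=> Aab; apply: ereal_inf_lbound; exists a, b. Qed.

Lemma leb_outer_cover_approx (A : set V) (e : R) : (0 < e)%R ->
  mu A \is a fin_num -> exists a b : nat -> V,
    A `<=` \bigcup_k box (a k) (b k) /\
    \sum_(k <oo) (box_vol (a k) (b k))%:E <= mu A + e%:E.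
Proof.
move=> e0 /(lb_ereal_inf_adherent e0)[_ [a [b [Aab ->]]] lt_ab].
by exists a, b; split => //; exact: ltW.
Qed.

Lemma leb_outer_bigcup_le (A : nat -> set V) (a b : nat -> nat -> V) :
  (forall n, A n `<=` \bigcup_k box (a n k) (b n k)) ->
  mu (\bigcup_n A n) <= \sum_(n <oo) \sum_(k <oo) (box_vol (a n k) (b n k))%:E.
Proof.
move=> Aab; have [f f_surj <-] :=
  @nneseries_pair_reindex _ (fun n k => (box_vol (a n k) (b n k))%:E)
  (fun n k => box_vol_ge0 _ _).
apply: leb_outer_le_cover => x [n _ /Aab[k _ xk]].
by have [m fm] := f_surj (n, k); exists m => //; rewrite fm.
Qed.

Lemma leb_outer_translate_le (y : V) (A : set V) : mu (translate y A) <= mu A.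
Proof.
apply: ereal_inf_le_tmp => _ [a [b [Aab ->]]].
exists (fun k => y + a k)%R, (fun k => y + b k)%R; split.
  move=> _ [x /Aab[k _ xk] <-]; exists k => // i.
  by rewrite !mxE lerD2l ltrD2l; exact: xk.
apply: eq_eseriesr => k _; congr (_%:E); apply: eq_bigr => i _.
by rewrite !mxE opprD addrACA subrr add0r.
Qed.

Variable d_gt0 : (0 < d)%N.

Lemma box_volxx (a : V) : box_vol a a = 0%R.
Proof. by rewrite /box_vol (bigD1 (Ordinal d_gt0)) //= subrr maxxx mul0r. Qed.

Lemma leb_outer0 : mu set0 = 0.
Proof.
apply/eqP; rewrite eq_le leb_outer_ge0 andbT.
have := @leb_outer_le_cover set0 (fun=> 0%R) (fun=> 0%R) (sub0set _).
by rewrite eseries0 // => k _ _; rewrite box_volxx.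
Qed.

Lemma leb_outer_box_le (a b : V) : mu (box a b) <= (box_vol a b)%:E.
Proof.
pose b' k := if k == 0%N then b else a.
apply: le_trans (@leb_outer_le_cover _ (fun=> a) b' _) _.
  by move=> x xab; exists 0%N.
rewrite (@nneseriesD1 _ _ 0%N) //=; last by move=> k _; rewrite lee_fin box_vol_ge0.
by rewrite eseries0 ?adde0 // => k _ /negbTE k0; rewrite /b' k0 box_volxx.
Qed.

Lemma leb_outer_sigma_subadditive : sigma_subadditive mu.
Proof.
move=> A; have [[n Anoo]|] := pselect (exists n, mu (A n) = +oo).
  rewrite (eseries_pinfty _ _ Anoo) ?leey// => k _.
  by rewrite -ltNye (lt_le_trans _ (leb_outer_ge0 _)).
rewrite -forallNE => Afin.
apply/lee_addgt0Pr => e e0.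
have An_fin n : mu (A n) \is a fin_num.
  by rewrite ge0_fin_numE ?leb_outer_ge0// ltey; exact/eqP/Afin.
have en_gt0 n : (0 < e / (2 ^ n.+1)%:R)%R by rewrite divr_gt0.
have [a a_cover] := boolp.choice (fun n =>
  leb_outer_cover_approx (en_gt0 n) (An_fin n)).
have [b ab_cover] := boolp.choice a_cover.
apply: le_trans (epsilon_trick _ (fun n => leb_outer_ge0 (A n)) (ltW e0)).
apply: le_trans (leb_outer_bigcup_le (fun n => (ab_cover n).1)) _.
apply: lee_nneseries => [n _ _|n _]; last exact: (ab_cover n).2.
by apply: nneseries_ge0 => k _; rewrite lee_fin box_vol_ge0.
Qed.

Definition leb_outer_measure : {outer_measure set V -> \bar R} :=
  HB.pack mu (isOuterMeasure.Build R V mu leb_outer0 leb_outer_ge0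
    le_leb_outer leb_outer_sigma_subadditive).

End lebesgue_outer.

Lemma bigcap_ord_ind (T : Type) n (P : set T -> Prop) (F : 'I_n -> set T) :
  P setT -> (forall A B, P A -> P B -> P (A `&` B)) -> (forall i, P (F i)) ->
  P (\bigcap_i F i).
Proof.
move=> PT PI PF; have -> : \bigcap_i F i = \big[setI/setT]_(i < n) F i.
  by rewrite -bigcap_seq; congr bigcap; apply/seteqP; split => i // _;
    rewrite /= mem_index_enum.
by elim/big_ind: _.
Qed.

Section boxes.
Variables (R : realType) (d : nat).
Local Notation V := 'rV[R]_d.

Definition obox (a b : V) : set V :=
  [set x | forall i, (a ord0 i < x ord0 i < b ord0 i)%R].

Lemma box_bigcap (a b : V) : box a b =
  \bigcap_i ([set x | x ord0 i < b ord0 i] `\` [set x | x ord0 i < a ord0 i]).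
Proof.
apply/seteqP; split => x /= xab i; last first.
  by have [/= xb /negP] := xab i I; rewrite -leNgt => ax; rewrite ax xb.
move=> _; have /andP[ax xb] : a ord0 i <= x ord0 i < b ord0 i := xab i.
by split => //=; apply/negP; rewrite -leNgt.
Qed.

Lemma open_obox (a b : V) : open (obox a b).
Proof.
have -> : obox a b =
    \bigcap_i (fun x : V => x ord0 i) @^-1` [set r | r \in `]a ord0 i, b ord0 i[].
  apply/seteqP; split => x /= xab i; first by move=> _; rewrite /= in_itv xab.
  by have := xab i I; rewrite /= in_itv.
apply: (bigcap_ord_ind (P := open)) => [|A B|i]; [exact: openT|exact: openI|].
by apply: open_comp; [move=> x _; exact: coord_continuous|exact: interval_open].
Qed.

End boxes.

Section measurability.
Variables (R : realType) (d : nat).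
Local Notation V := 'rV[R]_d.
Local Notation M := (@leb_measurable R d).

Definition set_coord (v : V) (i : 'I_d) (r : R) : V :=
  \row_j (if j == i then r else v ord0 j).

Lemma set_coordE v i r j : set_coord v i r ord0 j = if j == i then r else v ord0 j.
Proof. by rewrite mxE. Qed.

Lemma max0_split (a b t : R) :
  Num.max 0 (Num.min b t - a) + Num.max 0 (b - Num.max a t) = Num.max 0 (b - a).
Proof.
case: (leP b t) => bt; case: (leP a t) => at_;
  case: (leP 0 (b - a)) => ?; case: (leP 0 (b - t)) => ?;
  case: (leP 0 (t - a)) => ?; lra.
Qed.

Lemma box_vol_split (a b : V) i t :
  box_vol a (set_coord b i (Num.min (b ord0 i) t)) +
  box_vol (set_coord a i (Num.max (a ord0 i) t)) b = box_vol a b.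
Proof.
have vol_i (u v : V) : box_vol u v = Num.max 0 (v ord0 i - u ord0 i) *
    \prod_(j < d | j != i) Num.max 0 (v ord0 j - u ord0 j).
  by rewrite /box_vol (bigD1 i).
rewrite !vol_i !set_coordE eqxx -[in RHS](max0_split _ _ t) mulrDl.
by congr (_ * _ + _ * _); apply: eq_bigr => j ji; rewrite set_coordE (negbTE ji).
Qed.

Variable d_gt0 : (0 < d)%N.
Let lebO := leb_outer_measure R d_gt0.

Lemma leb_measurable_halfspace i t : M [set x | x ord0 i < t].
Proof.
apply: (le_caratheodory_measurable (mu := lebO)) => X.
apply: le_ereal_inf_tmp => _ [a [b [Xab ->]]].
pose b1 k := set_coord (b k) i (Num.min (b k ord0 i) t).
pose a2 k := set_coord (a k) i (Num.max (a k ord0 i) t).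
apply: le_trans (leeD (leb_outer_le_cover (a := a) (b := b1) _)
                      (leb_outer_le_cover (a := a2) (b := b) _)) _.
- move=> x [/Xab[k _ xk] /= xt]; exists k => // j; rewrite /b1 set_coordE.
  by case: eqP => [->|_]; [rewrite lt_min xt andbT|]; exact: xk.
- move=> x [/Xab[k _ xk] /= /negP]; rewrite -leNgt => tx.
  exists k => // j; rewrite /a2 set_coordE.
  case: eqP => [->|_]; last exact: xk.
  by have /andP[ax ->] := xk i; rewrite ge_max tx ax.
rewrite -nneseriesD => [|k _ _|k _ _]; try by rewrite lee_fin box_vol_ge0.
apply: lee_nneseries => [k _ _|k _]; last by rewrite -EFinD box_vol_split.
by rewrite adde_ge0 // lee_fin box_vol_ge0.
Qed.

Lemma leb_measurable_box (a b : V) : M (box a b).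
Proof.
rewrite box_bigcap; apply: (bigcap_ord_ind (P := M)) => [|A B|i].
- rewrite -setC0.
  exact: (@caratheodory_measurable_setC _ _ lebO _
    (caratheodory_measurable_set0 lebO)).
- exact: (@caratheodory_measurable_setI _ _ lebO).
exact: (@caratheodory_measurable_setD _ _ lebO _ _
  (leb_measurable_halfspace _ _) (leb_measurable_halfspace _ _)).
Qed.

Definition rat_box (p : 'rV[rat]_d * 'rV[rat]_d) : set V :=
  box (map_mx ratr p.1) (map_mx ratr p.2).

Lemma open_rat_box (U : set V) (x : V) : open U -> U x ->
  exists p, rat_box p x /\ rat_box p `<=` U.
Proof.
move=> /[apply]; rewrite /= nbhs_ballP => -[e /= e0 xeU].
have lo_ex i : exists q : rat, ratr q \in `]x ord0 i - e, x ord0 i[.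
  by apply: rat_in_itvoo; rewrite ltrBlDr ltrDl.
have hi_ex i : exists q : rat, ratr q \in `]x ord0 i, x ord0 i + e[.
  by apply: rat_in_itvoo; rewrite ltrDl.
have [[lo xlo] [hi xhi]] := (boolp.choice lo_ex, boolp.choice hi_ex).
exists (\row_i lo i, \row_i hi i); split.
  move=> i; rewrite !mxE; move: (xlo i) (xhi i); rewrite !in_itv /=.
  by move=> /andP[_ /ltW ->] /andP[-> _].
move=> z zp; apply: xeU; split => // k i; rewrite (ord1 k).
have := zp i; rewrite /= !mxE => /andP[lz zh].
move: (xlo i) (xhi i); rewrite !in_itv /= => /andP[lo1 lo2] /andP[hi1 hi2].
rewrite /ball /= ltr_norml; apply/andP; split; lra.
Qed.

Lemma leb_measurable_open (U : set V) : open U -> M U.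
Proof.
move=> oU.
pose B n := if unpickle n is Some p then
  (if `[< rat_box p `<=` U >] then rat_box p else set0) else set0.
have -> : U = \bigcup_n B n.
  apply/seteqP; split => [x Ux|x [n _]]; last first.
    by rewrite /B; case: unpickle => // p; case: ifPn => // /asboolP; apply.
  have [p [px pU]] := open_rat_box oU Ux.
  by exists (pickle p) => //; rewrite /B pickleK; case: asboolP.
apply: (@caratheodory_measurable_bigcup _ _ lebO) => n; rewrite /B.
case: unpickle => [p|]; last exact: (caratheodory_measurable_set0 lebO).
by case: ifP => _; [exact: leb_measurable_box|exact: (caratheodory_measurable_set0 lebO)].
Qed.

Lemma leb_measurable_closed (A : set V) : closed A -> M A.
Proof.
move=> cA; rewrite -(setCK A).
exact: (@caratheodory_measurable_setC _ _ lebO _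
  (leb_measurable_open (closed_openC cA))).
Qed.

End measurability.

Lemma expr1D_le_convex (F : realFieldType) (t : F) n : 0 <= t -> t <= 1 ->
  (1 + t) ^+ n <= 1 + t * (2 ^+ n - 1).
Proof.
move=> t0 t1; elim: n => [|n IH]; first by rewrite !expr0 subrr mulr0 addr0.
have two_n : 1 <= (2 : F) ^+ n by apply: exprn_ege1; lra.
rewrite !exprS; apply: (le_trans (ler_wpM2l _ IH)); first lra.
have : 0 <= t * (1 - t) * (2 ^+ n - 1) by rewrite !mulr_ge0 // subr_ge0.
nra.
Qed.

Section regularity.
Variables (R : realType) (d : nat).
Local Notation V := 'rV[R]_d.
Local Notation mu := (@leb_outer R d).
Local Notation M := (@leb_measurable R d).

Lemma box_vol_dilate (a b : V) (t : R) : 0 <= t ->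
  box_vol (a - t *: (b - a)) b = (1 + t) ^+ d * box_vol a b.
Proof.
move=> t0; rewrite -[d in (1 + t) ^+ d]card_ord -prodr_const -big_split /=.
apply: eq_bigr => i _; rewrite !mxE maxr_pMr ?mulr0; last lra.
by congr (Num.max _ _); ring.
Qed.

Lemma leb_outer_dilated_cover (a b : nat -> V) (t : R) : 0 <= t ->
  (mu (\bigcup_k obox (a k - t *: (b k - a k)) (b k)) <=
   ((1 + t) ^+ d)%:E * \sum_(k <oo) (box_vol (a k) (b k))%:E)%E.
Proof.
move=> t0; rewrite -nneseriesZl => [|k _]; last by rewrite lee_fin box_vol_ge0.
apply: le_trans (leb_outer_le_cover (a := fun k => a k - t *: (b k - a k)) (b := b) _) _.
  by move=> x [k _ xk]; exists k => // i; have /andP[/ltW -> ->] := xk i.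
by apply: lee_nneseries => k _; rewrite ?lee_fin ?box_vol_ge0 // box_vol_dilate.
Qed.

Lemma leb_outer_open_approx (X : set V) (eta : R) : 0 < eta ->
  mu X \is a fin_num -> exists2 U, open U & X `<=` U /\ (mu U <= mu X + eta%:E)%E.
Proof.
move=> eta0 Xfin; have eta2 : 0 < eta / 2 by lra.
have [a [b [Xab]]] := leb_outer_cover_approx eta2 Xfin.
set S := (\sum_(k <oo) _)%E => S_le.
have S_ge0 : (0 <= S)%E by apply: nneseries_ge0 => k _; rewrite lee_fin box_vol_ge0.
have Sfin : S \is a fin_num.
  by rewrite ge0_fin_numE // (le_lt_trans S_le) // ltey_eq fin_numD Xfin.
set m := fine (mu X); set s := fine S; set c := m + eta / 2.
have m0 : 0 <= m by rewrite fine_ge0 // leb_outer_ge0.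
have sc : s <= c by rewrite -lee_fin /s /c fineK // EFinD /m fineK.
have s0 : 0 <= s by rewrite fine_ge0.
have two_d : 0 < (2 : R) ^+ d by rewrite exprn_gt0.
pose t := Num.min 1 (eta / (2 * 2 ^+ d * c)).
have c0 : 0 < c by rewrite /c; lra.
have t0 : 0 < t by rewrite lt_min ltr01 divr_gt0 // !mulr_gt0.
have t1 : t <= 1 by rewrite ge_min lexx.
have t_small : t * 2 ^+ d * c <= eta / 2.
  have : t <= eta / (2 * 2 ^+ d * c) by rewrite ge_min lexx orbT.
  by rewrite ler_pdivlMr ?mulr_gt0 //; nra.
exists (\bigcup_k obox (a k - t *: (b k - a k)) (b k)).
  by apply: bigcup_open => k _; exact: open_obox.
split.
  move=> x /Xab[k _ xk]; exists k => // i; have /andP[ax xb] := xk i.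
  rewrite !mxE xb andbT; suff : 0 < t * (b k ord0 i - a k ord0 i) by lra.
  by rewrite mulr_gt0 // subr_gt0 (le_lt_trans ax).
apply: le_trans (leb_outer_dilated_cover a b (ltW t0)) _.
rewrite -/S -(fineK Sfin) -(fineK Xfin) -EFinM -EFinD lee_fin -/s -/m.
apply: le_trans (ler_wpM2r s0 (expr1D_le_convex d (ltW t0) t1)) _.
have : t * 2 ^+ d * s <= t * 2 ^+ d * c by rewrite ler_wpM2l // mulr_ge0 // ltW.
have := mulr_ge0 (ltW t0) s0; move: sc t_small; rewrite /c; nra.
Qed.

(* [F := K \ U] for an open [U] covering [K \ A] with almost the same
   measure; measurability of [A] splits [mu U] into [mu (U /\ A)] and a part
   that already exceeds [mu (K \ A)]. *)
Lemma leb_measurable_closed_approx (A K : set V) (eta : R) :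
  M A -> closed K -> mu K \is a fin_num -> 0 < eta ->
  exists F, [/\ closed F, F `<=` A & (mu ((A `&` K) `\` F) <= eta%:E)%E].
Proof.
move=> mA cK Kfin eta0.
have KAfin := leb_outer_fin_num_sub (@subDsetl _ K A) Kfin.
have [U oU [KAU muU]] := leb_outer_open_approx eta0 KAfin.
exists (K `&` ~` U); split.
- by apply: closedI => //; exact: open_closedC.
- by move=> x [Kx Ux]; apply: contrapT => Ax; exact/Ux/KAU.
have le_UA : (mu ((A `&` K) `\` (K `&` ~` U)) <= mu (U `&` A))%E.
  apply: le_leb_outer => x [[Ax Kx] KUx]; split => //.
  by apply: contrapT => Ux; exact: KUx.
have le_KA : (mu (K `\` A) <= mu (U `&` ~` A))%E.
  by apply: le_leb_outer => x [Kx Ax]; split => //; exact: KAU.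
apply: le_trans le_UA _; rewrite -(leeD2rE _ _ KAfin).
by apply: le_trans (leeD2l _ le_KA) _; rewrite -(mA U) addeC.
Qed.

End regularity.

Lemma mx_coord_le_norm (K : realDomainType) m n (x : 'M[K]_(m, n)) i j :
  `|x i j| <= `|x|.
Proof. by rewrite [leRHS]mx_normrE; exact: (le_bigmax _ _ (i, j)). Qed.

Section covariogram.
Variables (R : realType) (d : nat).
Local Notation V := 'rV[R]_d.
Local Notation mu := (@leb_outer R d).
Local Notation M := (@leb_measurable R d).

Lemma windows_bounded q (y : 'I_q -> V) (W : 'I_q -> set V) :
  (forall i, window (W i)) ->
  exists2 r, 0 < r & forall i x, W i x -> `|x| <= r /\ `|x - y i| <= r.
Proof.
move=> Ww.
have : \forall r \near +oo, forall i, (forall x, W i x -> `|x| <= r) /\ `|y i| <= r.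
  apply: filter_forall => i; near=> r; split.
    by near: r; have [_ [Wb _]] := Ww i; exact: Wb.
  by near: r; apply: nbhs_pinfty_ge; exact: num_real.
move=> /pinfty_ex_gt0[r r0 Wr]; exists (r + r) => [|i x]; first exact: addr_gt0.
move=> /(proj1 (Wr i)) xr; split; first lra.
by apply: le_trans (ler_normB _ _) _; apply: lerD; case: (Wr i).
Unshelve. all: by end_near. Qed.

Variable d_gt0 : (0 < d)%N.

Lemma leb_outer_closed_ball_fin_num (r : R) : 0 < r ->
  mu (closed_ball 0 r) \is a fin_num.
Proof.
move=> r0; rewrite ge0_fin_numE ?leb_outer_ge0 //.
apply: (@le_lt_trans _ _ (mu (box (const_mx (- r)) (const_mx (r + 1))))).
  apply: le_leb_outer => x; rewrite closed_ballE // /closed_ball_ /= sub0r normrN => xr i.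
  have := mx_coord_le_norm x ord0 i; rewrite !mxE ler_norml => /andP[? ?].
  by apply/andP; split; lra.
by apply: le_lt_trans (leb_outer_box_le d_gt0 _ _) _; rewrite ltry.
Qed.

Lemma delta_sub_approx (y : V) (W A F D : set V) (eta : R) :
  F `<=` A -> mu W \is a fin_num -> (mu D <= eta%:E)%E ->
  A `&` translate y A `&` W `<=`
    (F `&` translate y F `&` W) `|` (D `|` translate y D) ->
  `|delta y W A - delta y W F| <= 2 * eta.
Proof.
move=> FA Wfin De AFD.
set SA := A `&` translate y A `&` W; set SF := F `&` translate y F `&` W.
have SFA : SF `<=` SA.
  by move=> x [[/FA Ax [z /FA Az yzx]] Wx]; split => //; split => //; exists z.
have SAfin : mu SA \is a fin_num by apply: leb_outer_fin_num_sub Wfin => x [].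
have SFfin := leb_outer_fin_num_sub SFA SAfin.
have lebU := outer_measureU2 (leb_outer_measure R d_gt0).
have SA_le : (mu SA <= mu SF + (eta%:E + eta%:E))%E.
  apply: le_trans (le_leb_outer AFD) _; apply: le_trans (lebU _ _) _.
  apply: leeD2l; apply: le_trans (lebU _ _) _.
  by apply: leeD => //; exact: le_trans (leb_outer_translate_le _ _) De.
have eta0 : 0 <= eta by rewrite -lee_fin (le_trans (leb_outer_ge0 D)).
move: SA_le (le_leb_outer SFA); rewrite /delta -/SA -/SF.
rewrite -(fineK SAfin) -(fineK SFfin) -!EFinD !lee_fin => ? ?.
by rewrite ler_norml; apply/andP; split; lra.
Qed.

Lemma delta_closed_approx q (y : 'I_q -> V) (W : 'I_q -> set V) (A : set V)
    (eta : R) : (forall i, window (W i)) -> M A -> 0 < eta ->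
  exists2 F, closed F &
    forall i, `|delta (y i) (W i) A - delta (y i) (W i) F| <= eta.
Proof.
move=> Ww mA eta0; have [r r0 Wr] := windows_bounded y Ww.
pose K := closed_ball (0 : V) r.
have K_norm x : K x = (`|x| <= r).
  by rewrite /K closed_ballE // /closed_ball_ /= sub0r normrN.
have Kfin := leb_outer_closed_ball_fin_num r0.
have WK i x : W i x -> K x by rewrite K_norm => /Wr[].
have WyK i z : W i (y i + z) -> K z.
  by rewrite K_norm => /Wr[_]; rewrite addrC addKr.
have [F [cF FA De]] := leb_measurable_closed_approx mA
  (@closed_ball_closed _ _ 0 r) Kfin (divr_gt0 eta0 (ltr0n _ 2)).
exists F => // i; have -> : eta = 2 * (eta / 2) by rewrite mulrC divfK.
apply: (delta_sub_approx FA (leb_outer_fin_num_sub (WK i) Kfin) De).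
move=> t [[At [z Az yzt]] Wt].
have [Ft|nFt] := pselect (F t); last by right; left; split => //; split => //; exact: WK Wt.
have [Fz|nFz] := pselect (F z); first by left; split => //; split => //; exists z.
right; right; exists z => //; split => //; split => //.
by apply: (WyK i); rewrite yzt.
Qed.

Lemma delta_combination_closed_to_measurable q (a : 'I_q -> R) (y : 'I_q -> V)
    (W : 'I_q -> set V) (c : R) : (forall i, window (W i)) ->
  (forall F, closed F -> 0 <= c + \sum_(i < q) a i * delta (y i) (W i) F) ->
  forall A, M A -> 0 <= c + \sum_(i < q) a i * delta (y i) (W i) A.
Proof.
move=> Ww closed_ge0 A mA; apply/ler_addgt0Pr => e e0.
pose sa := \sum_(i < q) `|a i|.
have sa0 : 0 <= sa by rewrite sumr_ge0.
have [F cF Fi] := delta_closed_approx y Ww mA (divr_gt0 e0 (ltr_wpDl sa0 ltr01)).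
have := closed_ge0 F cF.
have : `|\sum_(i < q) a i * delta (y i) (W i) A -
         \sum_(i < q) a i * delta (y i) (W i) F| <= sa * (e / (sa + 1)).
  rewrite -sumrB mulr_suml; apply: le_trans (ler_norm_sum _ _ _) _.
  by apply: ler_sum => i _; rewrite -mulrBr normrM ler_wpM2l.
have : sa * (e / (sa + 1)) <= e.
  by rewrite mulrCA ger_pMr // ler_pdivrMr ?ltr_wpDl //; lra.
rewrite ler_norml; move=> ? /andP[? ?] ?; lra.
Qed.

End covariogram.

Lemma leb_outer_dim0_ge1 (R : realType) (X : set 'rV[R]_0) : (1 <= leb_outer X)%E.
Proof.
apply: le_ereal_inf_tmp => _ [a [b [_ ->]]].
have vol1 k : box_vol (a k) (b k) = 1 by rewrite /box_vol big_ord0.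
apply: le_trans (nneseries_lim_ge 1 _); last by move=> k _ _; rewrite vol1 lee_fin.
by rewrite big_nat1 vol1.
Qed.

Lemma window_dim_gt0 (R : realType) (d : nat) (W : set 'rV[R]_d) :
  window W -> (0 < d)%N.
Proof.
case: d W => // W [_ [_ bd0]].
by have := leb_outer_dim0_ge1 (closure W `\` interior W); rewrite bd0 lee_fin ler10.
Qed.

Unset Implicit Arguments.

Theorem proposition4p11 (R : realType) (d : nat)
  (gamma : 'rV[R]_d -> set 'rV[R]_d -> R) :
  lc_admissible (@closed_set R d) gamma <->
  lc_admissible (@leb_measurable R d) gamma.
Proof.
split=> [F_adm|M_adm] q a y W c q_gt0 Ww ge0;
  have d_gt0 := window_dim_gt0 (Ww (Ordinal q_gt0)).
- by apply: F_adm => // A /(leb_measurable_closed d_gt0); exact: ge0.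
- by apply: M_adm => //; exact: delta_combination_closed_to_measurable ge0.
Qed.
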